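(* $\widehat{R}_{3/3,4}=-x^*\approx 3.287278452$, where $x^*$ is the smallest real root of \[ x^9+12x^8+60x^7+120x^6-144x^5-1152x^4-1536x^3+1152x^2+2304x-1536=0. \] (The class $\widehat{\Pi}_{3/3,4}$ consists of exactly three functions $\frac{a_3z^3+a_2z^2+a_1z+1}{(1-az)^3}$, with $a$ ranging over the three real roots of $24a^3-36a^2+12a-1=0$. The value $-x^*$ is attained for $a$ the smallest root, approximately $0.1289$.)
   Context: A real rational function $\psi$ is always considered in lowest terms, as a smooth function on $\mathbb{R}$ minus its finitely many poles. It is absolutely monotonic at $x\in\mathbb{R}$ if $x$ is not a pole and $\psi^{(k)}(x)\ge 0$ for all integers $k\ge 0$. The radius of absolute monotonicity is $R(\psi)=\sup\big(\{r\in[0,\infty): \psi \text{ is absolutely monotonic at each point of } [-r,0]\}\cup\{0\}\big)\in[0,+\infty]$. $\widehat{\Pi}_{s/s,p}$ denotes the set of real rational functions $\psi(z)=P(z)/(1-az)^s$ with $P$ a real polynomial of degree at most $s$ and $a\in\mathbb{R}$, such that $\psi(z)-e^z=O(z^{p+1})$ as $z\to0$. Finally, $\widehat{R}_{s/s,p}=\sup\{R(\psi):\psi\in\widehat{\Pi}_{s/s,p}\}$. *)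

From Stdlib Require Import Reals Lra.
Open Scope R_scope.

Definition poly_eval (s : nat) (c : nat -> R) (z : R) : R :=
  sum_f_R0 (fun i => c i * z ^ i) s.

Definition rat_expr (s : nat) (c : nat -> R) (a z : R) : R :=
  poly_eval s c z / (1 - a * z) ^ s.

(* psi = P/(1-az)^s is absolutely monotonic at x: x is not a pole, i.e. the
   rational function extends smoothly to a neighbourhood of x (removable
   zeros of the denominator are filled in, as for the lowest-terms form),
   and all derivatives psi^(k)(x), k >= 0, are nonnegative.  The family g
   gives the (necessarily unique) successive derivatives near x. *)
Definition abs_monotonic_at (s : nat) (c : nat -> R) (a x : R) : Prop :=
  exists (delta : R) (g : nat -> R -> R),
    0 < delta /\
    (forall y, Rabs (y - x) < delta -> (1 - a * y) ^ s <> 0 ->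
       g 0%nat y = rat_expr s c a y) /\
    (forall (k : nat) y, Rabs (y - x) < delta ->
       derivable_pt_lim (g k) y (g (S k) y)) /\
    (forall k : nat, 0 <= g k x).

(* The set whose supremum is R(psi):
   {r in [0,oo) : psi abs. monotonic on [-r,0]} union {0}. *)
Definition am_radius_set (s : nat) (c : nat -> R) (a : R) (r : R) : Prop :=
  (0 <= r /\ forall x, -r <= x <= 0 -> abs_monotonic_at s c a x) \/ r = 0.

Definition in_Pi_hat (s p : nat) (c : nat -> R) (a : R) : Prop :=
  exists C delta : R, 0 < delta /\
    forall z, Rabs z < delta -> (1 - a * z) ^ s <> 0 ->
      Rabs (rat_expr s c a z - exp z) <= C * Rabs z ^ (p + 1).

(* \hat R_{s/s,p} = L (a finite value): L is the least upper bound of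
   { R(psi) : psi in \hat\Pi_{s/s,p} }, equivalently of the union of the
   sets am_radius_set over the class (sup of sups = sup of the union). *)
Definition R_hat_eq (s p : nat) (L : R) : Prop :=
  is_lub (fun r => exists (c : nat -> R) (a : R),
                     in_Pi_hat s p c a /\ am_radius_set s c a r) L.

Definition R_psi_eq (s : nat) (c : nat -> R) (a : R) (L : R) : Prop :=
  is_lub (am_radius_set s c a) L.

Definition p9 (x : R) : R :=
  x^9 + 12*x^8 + 60*x^7 + 120*x^6 - 144*x^5 - 1152*x^4 - 1536*x^3
  + 1152*x^2 + 2304*x - 1536.

Definition cubic_a (a : R) : R := 24*a^3 - 36*a^2 + 12*a - 1.

(* Matching P(z)/(1-az)^3 with e^z up to order z^4 fixes
   P = Pa a (the Taylor numerator, coefficients 1, 1-3a, 1/2-3a+3a^2,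
   1/6-3a/2+3a^2-a^3) and forces the z^4 condition cubic_a a = 0; so the class
   consists of three functions psi_a, one for each root a1 < a2 < a3 of
   cubic_a (Pi_hat_characterization, coeffs_in_Pi_hat).  A partial fraction
   decomposition of psi_a gives closed forms for all derivatives
   (psi_deriv); for k >= 1 the k-th derivative is a positive factor times a
   quadratic in 1/(1-az) (psi_deriv_factor), so absolute monotonicity at x is
   a sign condition on explicit quantities (am_derivs_nonneg,
   am_of_derivs_nonneg).  Interval arithmetic on the roots then shows:
   psi_a1 is absolutely monotonic exactly on [xs, 0], where xs is the root of
   Pa a1 near -3.2873; psi_a2 has a negative 6th derivative at 0; and psi_a3
   is negative at -3.  Finally p9 = -1536 * Pa a1 * Pa a2 * Pa a3
   (p9_factorization), and a sign analysis shows xs is the smallest real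
   root of p9. *)

From Stdlib Require Import Reals Lra Lia Arith List Factorial.
From Coquelicot Require Import Coquelicot.
Import ListNotations.
Open Scope R_scope.

Lemma deriv_unique_loc (f1 f2 : R -> R) (y e l1 l2 : R) : 0 < e ->
  (forall t, Rabs (t - y) < e -> f1 t = f2 t) ->
  derivable_pt_lim f1 y l1 -> derivable_pt_lim f2 y l2 -> l1 = l2.
Proof.
  intros He Heq H1 H2.
  apply is_derive_Reals in H1. apply is_derive_Reals in H2.
  assert (H3 : is_derive f2 y l1).
  { apply (is_derive_ext_loc f1 f2); auto.
    exists (mkposreal e He). intros t Ht. apply Heq. exact Ht. }
  apply is_derive_unique in H3. apply is_derive_unique in H2. congruence.
Qed.

Lemma mvt_from_zero (f g : R -> R) (t : R) : f 0 = 0 ->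
  (forall s, derivable_pt_lim f s (g s)) ->
  exists c, Rabs c <= Rabs t /\ f t = g c * t.
Proof.
  intros Hf0 Hd.
  destruct (Rtotal_order t 0) as [Hlt|[->|Hgt]].
  - destruct (MVT_cor2 f g t 0 Hlt (fun c _ => Hd c)) as [c [Hc Hct]].
    exists c. split; [rewrite !Rabs_left; lra | lra].
  - exists 0. split; [lra | rewrite Hf0; ring].
  - destruct (MVT_cor2 f g 0 t Hgt (fun c _ => Hd c)) as [c [Hc Hct]].
    exists c. split; [rewrite !Rabs_right; lra | lra].
Qed.

Lemma mvt_bound (f g : R -> R) (K : R) (n : nat) : 0 <= K -> f 0 = 0 ->
  (forall t, derivable_pt_lim f t (g t)) ->
  (forall s, Rabs s <= 1 -> Rabs (g s) <= K * Rabs s ^ n) ->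
  forall t, Rabs t <= 1 -> Rabs (f t) <= K * Rabs t ^ (S n).
Proof.
  intros HK Hf0 Hd Hg t Ht.
  destruct (mvt_from_zero f g t Hf0 Hd) as [c [Hct ->]].
  assert (Hcn : Rabs c ^ n <= Rabs t ^ n) by (apply pow_incr; split; [apply Rabs_pos | exact Hct]).
  assert (Hgc : Rabs (g c) <= K * Rabs t ^ n).
  { eapply Rle_trans; [apply Hg; lra | apply Rmult_le_compat_l; auto]. }
  rewrite Rabs_mult. simpl.
  pose proof (Rabs_pos t). pose proof (Rabs_pos (g c)). nra.
Qed.

Fixpoint exp_taylor (n : nat) (z : R) : R :=
  match n with
  | O => 1
  | S m => exp_taylor m z + z ^ S m / INR (fact (S m))
  end.

Lemma exp_taylor_deriv (n : nat) (z : R) :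
  derivable_pt_lim (exp_taylor (S n)) z (exp_taylor n z).
Proof.
  induction n as [|n IH].
  - apply is_derive_Reals. simpl. auto_derive; auto. field.
  - apply is_derive_Reals. apply is_derive_Reals in IH.
    assert (Hmon : is_derive (fun t => t ^ S (S n) / INR (fact (S (S n)))) z
                     (z ^ S n / INR (fact (S n)))).
    { pose proof (derivable_pt_lim_scal _ (/ INR (fact (S (S n)))) z _
                      (derivable_pt_lim_pow z (S (S n)))) as Hs.
      apply is_derive_Reals in Hs.
      replace (z ^ S n / INR (fact (S n)))
        with (/ INR (fact (S (S n))) * (INR (S (S n)) * z ^ pred (S (S n)))).
      - apply (is_derive_ext (mult_real_fct (/ INR (fact (S (S n)))) (fun y => y ^ S (S n))));
          [intros t; unfold mult_real_fct, Rdiv; apply Rmult_comm | exact Hs].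
      - change (fact (S (S n))) with (S (S n) * fact (S n))%nat.
        rewrite mult_INR. simpl pred.
        pose proof (INR_fact_neq_0 (S n)).
        assert (INR (S (S n)) <> 0) by (apply not_0_INR; lia).
        field. auto. }
    exact (is_derive_plus _ _ _ _ _ IH Hmon).
Qed.

Lemma exp_taylor_at_0 (n : nat) : exp_taylor n 0 = 1.
Proof.
  induction n as [|n IH]; simpl; [reflexivity|].
  rewrite IH. unfold Rdiv. ring.
Qed.

Lemma exp_le_3_on_unit_ball (s : R) : Rabs s <= 1 -> Rabs (exp s) <= 3.
Proof.
  intros Hs. rewrite Rabs_right by (left; apply exp_pos).
  assert (exp s <= exp 1).
  { destruct (Req_dec s 1) as [->|Hne]; [lra|].
    left. apply exp_increasing. pose proof (Rle_abs s). lra. }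
  pose proof exp_le_3. lra.
Qed.

Lemma exp_taylor_remainder (n : nat) (z : R) :
  Rabs z <= 1 -> Rabs (exp z - exp_taylor n z) <= 3 * Rabs z ^ S n.
Proof.
  revert z. induction n as [|n IH]; intros z Hz.
  - apply (mvt_bound (fun t => exp t - exp_taylor 0 t) exp 3 0); auto; try lra.
    + simpl. rewrite exp_0. ring.
    + intros t. apply is_derive_Reals. simpl. auto_derive; auto. ring.
    + intros s Hs. simpl. rewrite Rmult_1_r. apply exp_le_3_on_unit_ball; auto.
  - apply (mvt_bound (fun t => exp t - exp_taylor (S n) t) (fun t => exp t - exp_taylor n t)
             3 (S n)); auto; try lra.
    + rewrite exp_0, exp_taylor_at_0. ring.
    + intros t. apply derivable_pt_lim_minus;
        [apply derivable_pt_lim_exp | apply exp_taylor_deriv].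
Qed.

Lemma exp_taylor_4 (z : R) : exp_taylor 4 z = 1 + z + z^2/2 + z^3/6 + z^4/24.
Proof. simpl. field. Qed.

Fixpoint peval (l : list R) (z : R) : R :=
  match l with nil => 0 | q :: l' => q + z * peval l' z end.

Lemma peval_bounded (l : list R) :
  exists S, 0 <= S /\ forall z, 0 <= z <= 1 -> Rabs (peval l z) <= S.
Proof.
  induction l as [|q l [S [HS H]]].
  - exists 0. split; [lra|]. intros z _. simpl. rewrite Rabs_R0. lra.
  - exists (Rabs q + S). split; [pose proof (Rabs_pos q); lra|].
    intros z Hz. simpl. eapply Rle_trans; [apply Rabs_triang|].
    rewrite Rabs_mult, (Rabs_right z) by lra.
    specialize (H z Hz). pose proof (Rabs_pos (peval l z)). nra.
Qed.

Lemma peval_head_zero (n : nat) (q : R) (l : list R) (K d : R) : 0 < d ->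
  (forall z, 0 < z < d -> Rabs (peval (q :: l) z) <= K * z ^ S n) ->
  q = 0 /\ (forall z, 0 < z < d -> Rabs (peval l z) <= K * z ^ n).
Proof.
  intros Hd H. destruct (peval_bounded l) as [S [HS HB]].
  set (M := Rabs K + S + 1).
  assert (HM : 0 < M) by (unfold M; pose proof (Rabs_pos K); lra).
  assert (Hq : forall z, 0 < z < Rmin d 1 -> Rabs q <= M * z).
  { intros z Hz.
    pose proof (Rmin_l d 1). pose proof (Rmin_r d 1).
    specialize (H z ltac:(lra)). simpl in H. specialize (HB z ltac:(lra)).
    replace q with ((q + z * peval l z) - z * peval l z) by ring.
    eapply Rle_trans; [apply Rabs_triang|].
    rewrite Rabs_Ropp, Rabs_mult, (Rabs_right z) by lra.
    assert (z ^ n <= 1) by (rewrite <- (pow1 n); apply pow_incr; lra).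
    assert (0 <= z ^ n) by (apply pow_le; lra).
    assert (K * (z * z ^ n) <= Rabs K * z).
    { apply (Rle_trans _ (Rabs K * (z * z ^ n))).
      - apply Rmult_le_compat_r; [apply Rmult_le_pos; lra | apply Rle_abs].
      - apply Rmult_le_compat_l; [apply Rabs_pos | nra]. }
    unfold M. pose proof (Rabs_pos (peval l z)). nra. }
  assert (Hq0 : q = 0).
  { apply Rabs_eq_0. apply Rle_antisym; [|apply Rabs_pos].
    apply Rnot_lt_le. intros Hpos.
    set (z := Rmin (Rmin d 1) (Rabs q / M) / 2).
    assert (Hm : 0 < Rmin (Rmin d 1) (Rabs q / M)).
    { apply Rmin_glb_lt; [apply Rmin_glb_lt; lra | apply Rdiv_lt_0_compat; lra]. }
    pose proof (Rmin_l (Rmin d 1) (Rabs q / M)). pose proof (Rmin_r (Rmin d 1) (Rabs q / M)).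
    specialize (Hq z ltac:(unfold z; lra)).
    assert (Hzq : M * z < Rabs q).
    { apply (Rlt_le_trans _ (M * (Rabs q / M))).
      - apply Rmult_lt_compat_l; [lra | unfold z; lra].
      - right. field. lra. }
    lra. }
  split; [exact Hq0|]. subst q. intros z Hz. specialize (H z Hz). simpl in H.
  rewrite Rplus_0_l, Rabs_mult, (Rabs_right z) in H by lra.
  apply Rmult_le_reg_l with z; [lra|]. nra.
Qed.

Lemma peval_small_coeffs (n : nat) (l : list R) (K d : R) : 0 < d ->
  (forall z, 0 < z < d -> Rabs (peval l z) <= K * z ^ n) ->
  forall i, (i < n)%nat -> nth i l 0 = 0.
Proof.
  intros Hd. revert l. induction n as [|n IH]; intros l H i Hi; [lia|].
  destruct l as [|q l]; [destruct i; reflexivity|].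
  destruct (peval_head_zero n q l K d Hd H) as [Hq Hl].
  destruct i as [|i]; [exact Hq|].
  apply (IH l Hl i). lia.
Qed.

Lemma inv_pow_deriv (a : R) (n : nat) (z : R) : 1 - a * z <> 0 ->
  derivable_pt_lim (fun t => / (1 - a * t) ^ n) z (INR n * a * / (1 - a * z) ^ S n).
Proof.
  intros Hw. apply is_derive_Reals.
  destruct n as [|m].
  - simpl. auto_derive; auto. field. auto.
  - auto_derive. { change ((1 + - (a * z)) ^ S m <> 0). apply pow_nonzero. intro E; apply Hw; lra. }
    replace (match m with 0%nat => 1 | S _ => INR m + 1 end) with (INR m + 1) by (destruct m; simpl; ring).
    rewrite S_INR. replace (1 + - (a*z)) with (1 - a*z) by ring.
    assert (Hp: (1 - a*z)^m <> 0) by (apply pow_nonzero; auto).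
    simpl pow. set (p := (1 - a*z)^m) in *. field. auto.
Qed.

(* The k-th derivative of j! / (1-az)^(j+1), namely
   a^k (k+j)! / (1-az)^(k+j+1). *)
Definition pf_term (a : R) (j k : nat) (z : R) : R :=
  a ^ k * INR (fact (k + j)) / (1 - a * z) ^ S (k + j).

Lemma pf_term_deriv (a : R) (j k : nat) (z : R) : 1 - a * z <> 0 ->
  derivable_pt_lim (pf_term a j k) z (pf_term a j (S k) z).
Proof.
  intros Hw.
  pose proof (derivable_pt_lim_scal _ (a ^ k * INR (fact (k + j))) z _
                (inv_pow_deriv a (S (k + j)) z Hw)) as H.
  replace (pf_term a j (S k) z)
    with (a ^ k * INR (fact (k + j)) * (INR (S (k + j)) * a * / (1 - a * z) ^ S (S (k + j)))).
  - apply is_derive_Reals. apply is_derive_Reals in H.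
    apply (is_derive_ext (mult_real_fct (a ^ k * INR (fact (k + j)))
                            (fun t => / (1 - a * t) ^ S (k + j)))); [|exact H].
    intros t. reflexivity.
  - unfold pf_term. change (S k + j)%nat with (S (k + j)). change (fact (S (k + j))) with (S (k + j) * fact (k + j))%nat.
    rewrite mult_INR. simpl pow. unfold Rdiv. ring.
Qed.

(* The numerator of psi_a: the unique cubic P with P(z)/(1-az)^3 = e^z + O(z^4). *)
Definition Pa (a z : R) : R :=
  1 + (1 - 3*a)*z + (/2 - 3*a + 3*a^2)*z^2 + (/6 - 3*a/2 + 3*a^2 - a^3)*z^3.

(* Partial fractions: a^3 psi_a(z) = pf0 + pf1/(1-az) + pf2/(1-az)^2 + pf3/(1-az)^3. *)
Definition pf0 (a : R) : R := -(/6 - 3*a/2 + 3*a^2 - a^3).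
Definition pf1 (a : R) : R := /2 - 4*a + 6*a^2.
Definition pf2 (a : R) : R := -/2 + 7*a/2 - 4*a^2.
Definition pf3 (a : R) : R := /6 - a + a^2.

Definition psi_deriv (a : R) (k : nat) (z : R) : R :=
  ((match k with O => pf0 a | S _ => 0 end)
   + pf1 a * pf_term a 0 k z + pf2 a * pf_term a 1 k z + pf3 a / 2 * pf_term a 2 k z) / a ^ 3.

Lemma psi_deriv_0 (a z : R) : a <> 0 -> 1 - a * z <> 0 ->
  psi_deriv a 0 z = Pa a z / (1 - a * z) ^ 3.
Proof. intros Ha Hw. unfold psi_deriv, pf_term, Pa, pf0, pf1, pf2, pf3. simpl. field. auto. Qed.

Lemma psi_deriv_succ (a : R) (k : nat) (z : R) : 1 - a * z <> 0 ->
  derivable_pt_lim (psi_deriv a k) z (psi_deriv a (S k) z).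
Proof.
  intros Hw.
  assert (Hterm : forall j, is_derive (pf_term a j k) z (pf_term a j (S k) z))
    by (intros j; apply is_derive_Reals, pf_term_deriv; exact Hw).
  apply is_derive_Reals. unfold psi_deriv.
  auto_derive.
  - repeat split; eexists; apply Hterm.
  - rewrite !(is_derive_unique _ _ _ (Hterm _)). simpl. unfold Rdiv. ring.
Qed.

(* The quadratic factor of the derivatives of order k >= 1, in m = k+1 and
   u = 1/(1-az). *)
Definition deriv_quadratic (a m u : R) : R :=
  pf1 a + pf2 a * m * u + pf3 a * m * (m + 1) / 2 * u ^ 2.

Lemma psi_deriv_factor (a : R) (j : nat) (z : R) : a <> 0 -> 1 - a * z <> 0 ->
  psi_deriv a (S j) z =
    a ^ S j * INR (fact (S j)) * (/ (1 - a * z)) ^ S (S j) / a ^ 3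
    * deriv_quadratic a (INR (S (S j))) (/ (1 - a * z)).
Proof.
  intros Ha Hw. unfold psi_deriv, pf_term, deriv_quadratic.
  rewrite !Nat.add_0_r.
  replace (S j + 1)%nat with (S (S j)) by lia.
  replace (S j + 2)%nat with (S (S (S j))) by lia.
  change (fact (S (S (S j)))) with (S (S (S j)) * fact (S (S j)))%nat.
  change (fact (S (S j))) with (S (S j) * fact (S j))%nat.
  rewrite !mult_INR, !S_INR. unfold Rdiv. rewrite <- !pow_inv.
  assert (Hp : (/ (1 - a * z)) ^ j <> 0) by (apply pow_nonzero, Rinv_neq_0_compat; auto).
  simpl pow. set (p := (/ (1 - a * z)) ^ j) in *. field. auto.
Qed.

Definition cmatch (c : nat -> R) (a : R) : Prop :=
  c 0%nat = 1 /\ c 1%nat = 1 - 3*a /\ c 2%nat = /2 - 3*a + 3*a^2 /\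
  c 3%nat = /6 - 3*a/2 + 3*a^2 - a^3.

Lemma rat_expr_match (c : nat -> R) (a z : R) : cmatch c a ->
  rat_expr 3 c a z = Pa a z / (1 - a * z) ^ 3.
Proof.
  intros (H0 & H1 & H2 & H3). unfold rat_expr, poly_eval, Pa. simpl.
  rewrite H0, H1, H2, H3. unfold Rdiv. apply Rmult_eq_compat_r. ring.
Qed.

Lemma am_value_nonneg (s : nat) (c : nat -> R) (a x : R) :
  abs_monotonic_at s c a x -> (1 - a * x) ^ s <> 0 -> 0 <= rat_expr s c a x.
Proof.
  intros [d [g [Hd [H0 [_ Hk]]]]] Hw.
  rewrite <- H0; auto. rewrite Rminus_diag, Rabs_R0; auto.
Qed.

(* Absolute monotonicity of psi_a at x forces psi_deriv a k x >= 0 for all k: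
   the family g of the definition must coincide with psi_deriv near x. *)
Lemma am_derivs_nonneg (c : nat -> R) (a x r : R) : a <> 0 -> cmatch c a -> 0 < r ->
  (forall y, Rabs (y - x) < r -> 1 - a * y <> 0) ->
  abs_monotonic_at 3 c a x -> forall k, 0 <= psi_deriv a k x.
Proof.
  intros Ha Hc Hr Hw [d [g [Hd [H0 [Hder Hk]]]]].
  pose proof (Rmin_l d r). pose proof (Rmin_r d r).
  assert (He : 0 < Rmin d r) by (apply Rmin_glb_lt; auto).
  set (e := Rmin d r) in *.
  assert (Hagree : forall k y, Rabs (y - x) < e -> g k y = psi_deriv a k y).
  { induction k as [|k IH]; intros y Hy.
    - assert (Hwy : 1 - a * y <> 0) by (apply Hw; lra).
      rewrite H0, psi_deriv_0, rat_expr_match; auto; [lra | apply pow_nonzero; auto].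
    - apply (deriv_unique_loc (g k) (psi_deriv a k) y (e - Rabs (y - x))); [lra| | |].
      + intros t Ht. apply IH.
        replace (t - x) with ((t - y) + (y - x)) by ring.
        eapply Rle_lt_trans; [apply Rabs_triang | lra].
      + apply Hder. lra.
      + apply psi_deriv_succ, Hw. lra. }
  intros k. rewrite <- Hagree; [apply Hk|]. rewrite Rminus_diag, Rabs_R0. exact He.
Qed.

Lemma am_of_derivs_nonneg (c : nat -> R) (a x : R) : a <> 0 -> cmatch c a ->
  (forall y, Rabs (y - x) < 1 -> 1 - a * y <> 0) ->
  (forall k, 0 <= psi_deriv a k x) -> abs_monotonic_at 3 c a x.
Proof.
  intros Ha Hc Hw Hk. exists 1, (psi_deriv a). repeat split; auto; [lra| |].
  - intros y Hy _. rewrite psi_deriv_0, rat_expr_match; auto.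
  - intros k y Hy. apply psi_deriv_succ, Hw, Hy.
Qed.

Definition taylor_tail (a z : R) : R :=
  (a/8 - a^2/2 + a^3/2) + (a^3/6 - a^2/8) * z + a^3/24 * z^2.

Lemma Pa_taylor_defect (a z : R) :
  Pa a z - exp_taylor 4 z * (1 - a * z) ^ 3 = cubic_a a / 24 * z^4 + z^5 * taylor_tail a z.
Proof. rewrite exp_taylor_4. unfold Pa, cubic_a, taylor_tail. field. Qed.

Lemma Pi_hat_defect_bound (c : nat -> R) (a : R) : in_Pi_hat 3 4 c a ->
  exists K d, 0 < d /\ forall z, 0 < z < d ->
    Rabs (poly_eval 3 c z - exp_taylor 4 z * (1 - a * z) ^ 3) <= K * z ^ 5.
Proof.
  intros [C [d [Hd H]]].
  assert (Ha1 : 0 < Rabs a + 1) by (pose proof (Rabs_pos a); lra).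
  set (d' := Rmin d (Rmin 1 (/ (2 * (Rabs a + 1))))).
  exists (27/8 * (Rabs C + 3)), d'. split.
  { apply Rmin_glb_lt; auto. apply Rmin_glb_lt; [lra|]. apply Rinv_0_lt_compat. lra. }
  intros z Hz.
  pose proof (Rmin_l d (Rmin 1 (/ (2 * (Rabs a + 1))))).
  pose proof (Rmin_r d (Rmin 1 (/ (2 * (Rabs a + 1))))).
  pose proof (Rmin_l 1 (/ (2 * (Rabs a + 1)))). pose proof (Rmin_r 1 (/ (2 * (Rabs a + 1)))).
  fold d' in H0, H1.
  assert (Haz : Rabs a * z <= /2).
  { assert (Hz1 : z * (2 * (Rabs a + 1)) <= 1).
    { apply (Rmult_le_reg_r (/ (2 * (Rabs a + 1)))); [apply Rinv_0_lt_compat; lra|].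
      rewrite Rmult_assoc, Rinv_r, Rmult_1_r, Rmult_1_l by lra. lra. }
    pose proof (Rabs_pos a). nra. }
  assert (Hw : /2 <= 1 - a * z <= 3/2).
  { assert (a * z <= Rabs a * z) by (apply Rmult_le_compat_r; [lra | apply Rle_abs]).
    assert (- a * z <= Rabs a * z).
    { apply Rmult_le_compat_r; [lra|]. rewrite <- Rabs_Ropp. apply Rle_abs. }
    lra. }
  set (w := 1 - a * z) in *.
  assert (Hw3 : 0 < w ^ 3 <= 27/8).
  { split; [apply pow_lt; lra|]. assert (w * w <= 9/4) by nra. simpl. nra. }
  specialize (H z ltac:(rewrite Rabs_right; lra) ltac:(change (w ^ 3 <> 0); lra)).
  pose proof (exp_taylor_remainder 4 z ltac:(rewrite Rabs_right; lra)) as Hexp.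
  replace (poly_eval 3 c z - exp_taylor 4 z * w ^ 3)
    with (w ^ 3 * (rat_expr 3 c a z - exp z) + (exp z - exp_taylor 4 z) * w ^ 3)
    by (unfold rat_expr, w; field; fold w; lra).
  eapply Rle_trans; [apply Rabs_triang|]. rewrite !Rabs_mult.
  rewrite (Rabs_right (w ^ 3)) by lra. rewrite (Rabs_right z) in * by lra.
  replace (4 + 1)%nat with 5%nat in H by reflexivity.
  assert (0 <= z ^ 5) by (apply pow_le; lra).
  pose proof (Rle_abs C).
  pose proof (Rabs_pos (rat_expr 3 c a z - exp z)). pose proof (Rabs_pos (exp z - exp_taylor 4 z)).
  assert (w ^ 3 * Rabs (rat_expr 3 c a z - exp z) <= 27/8 * (Rabs C * z ^ 5)) by nra.
  assert (Rabs (exp z - exp_taylor 4 z) * w ^ 3 <= 27/8 * (3 * z ^ 5)) by nra.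
  nra.
Qed.

Lemma Pi_hat_characterization (c : nat -> R) (a : R) : in_Pi_hat 3 4 c a ->
  cubic_a a = 0 /\ cmatch c a.
Proof.
  intros Hpi. destruct (Pi_hat_defect_bound c a Hpi) as [K [d [Hd HK]]].
  set (l := [c 0%nat - 1; c 1%nat - (1 - 3*a); c 2%nat - (/2 - 3*a + 3*a^2);
             c 3%nat - (/6 - 3*a/2 + 3*a^2 - a^3); cubic_a a / 24;
             a/8 - a^2/2 + a^3/2; a^3/6 - a^2/8; a^3/24]).
  assert (Hl : forall z, peval l z = poly_eval 3 c z - exp_taylor 4 z * (1 - a * z) ^ 3).
  { intros z. pose proof (Pa_taylor_defect a z) as E.
    unfold l, poly_eval, taylor_tail, Pa in *. simpl in *. lra. }
  assert (Hzero := peval_small_coeffs 5 l K d Hd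
                     ltac:(intros z Hz; rewrite Hl; apply HK, Hz)).
  pose proof (Hzero 0%nat ltac:(lia)). pose proof (Hzero 1%nat ltac:(lia)).
  pose proof (Hzero 2%nat ltac:(lia)). pose proof (Hzero 3%nat ltac:(lia)).
  pose proof (Hzero 4%nat ltac:(lia)).
  unfold l, cmatch in *. simpl in *. repeat split; lra.
Qed.

Definition coeffs (a : R) (i : nat) : R :=
  match i with
  | 0%nat => 1 | 1%nat => 1 - 3*a | 2%nat => /2 - 3*a + 3*a^2
  | 3%nat => /6 - 3*a/2 + 3*a^2 - a^3 | _ => 0
  end.

Lemma coeffs_match (a : R) : cmatch (coeffs a) a.
Proof. unfold cmatch, coeffs. repeat split; reflexivity. Qed.

Lemma coeffs_in_Pi_hat (a : R) : cubic_a a = 0 -> 0 < a < /2 -> in_Pi_hat 3 4 (coeffs a) a.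
Proof.
  intros Hc Ha. exists 6, (/2). split; [lra|].
  intros z Hz _.
  pose proof (Rle_abs z). pose proof (Rle_abs (-z)). rewrite Rabs_Ropp in *.
  assert (Hw : 3/4 <= 1 - a * z) by nra.
  set (w := 1 - a * z) in *.
  assert (Hw3 : 27/64 <= w ^ 3) by (simpl; nra).
  assert (Hinv : 0 < / w ^ 3 <= 3).
  { split; [apply Rinv_0_lt_compat; lra|].
    apply (Rmult_le_reg_l (w ^ 3)); [lra|]. rewrite Rinv_r by lra. lra. }
  assert (Htail : Rabs (taylor_tail a z) <= 1).
  { assert (0 <= a^2 <= /4) by (simpl; nra). assert (0 <= a^3 <= /8) by (simpl; nra).
    assert (0 <= z^2 <= /4) by (simpl; nra).
    apply Rabs_le. unfold taylor_tail. split; nra. }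
  pose proof (exp_taylor_remainder 4 z ltac:(lra)) as Hexp.
  pose proof (Pa_taylor_defect a z) as E. rewrite Hc in E. fold w in E.
  rewrite rat_expr_match by apply coeffs_match. fold w.
  replace (Pa a z / w ^ 3 - exp z)
    with (z ^ 5 * taylor_tail a z * / w ^ 3 - (exp z - exp_taylor 4 z))
    by (field_simplify_eq; [lra | lra]).
  eapply Rle_trans; [apply Rabs_triang|]. rewrite Rabs_Ropp, !Rabs_mult, <- RPow_abs.
  rewrite (Rabs_right (/ w ^ 3)) by lra.
  replace (4 + 1)%nat with 5%nat by reflexivity.
  pose proof (pow_le (Rabs z) 5 (Rabs_pos z)). pose proof (Rabs_pos (taylor_tail a z)).
  assert (Rabs z ^ 5 * Rabs (taylor_tail a z) * / w ^ 3 <= Rabs z ^ 5 * 3).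
  { apply (Rle_trans _ (Rabs z ^ 5 * 1 * / w ^ 3)); [|nra].
    apply Rmult_le_compat_r; [lra|]. apply Rmult_le_compat_l; lra. }
  lra.
Qed.

Lemma cubic_root_relations (a1 a2 a3 : R) :
  cubic_a a1 = 0 -> cubic_a a2 = 0 -> cubic_a a3 = 0 ->
  a1 <> a2 -> a1 <> a3 -> a2 <> a3 ->
  2*a2^2 = -2*a1^2 - 2*a1*a2 + 3*a1 + 3*a2 - 1 /\ 2*a3 = 3 - 2*a1 - 2*a2.
Proof.
  intros H1 H2 H3 D12 D13 D23.
  set (q := fun b => 2*b^2 + 2*a1*b + 2*a1^2 - 3*a1 - 3*b + 1).
  assert (Hq : forall b, cubic_a b - cubic_a a1 = 12 * (b - a1) * q b)
    by (intros b; unfold q, cubic_a; ring).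
  assert (Hq2 : q a2 = 0).
  { pose proof (Hq a2) as E. rewrite H1, H2 in E.
    destruct (Rmult_integral (12 * (a2 - a1)) (q a2)) as [E'|E']; [lra | | exact E'].
    exfalso. apply D12. lra. }
  assert (Hq3 : q a3 = 0).
  { pose proof (Hq a3) as E. rewrite H1, H3 in E.
    destruct (Rmult_integral (12 * (a3 - a1)) (q a3)) as [E'|E']; [lra | | exact E'].
    exfalso. apply D13. lra. }
  assert (E : (a3 - a2) * (2*a1 + 2*a2 + 2*a3 - 3) = 0)
    by (rewrite <- (Rminus_diag_eq _ _ (eq_trans Hq3 (eq_sym Hq2))); unfold q; ring).
  destruct (Rmult_integral _ _ E) as [E'|E']; [exfalso; apply D23; lra|].
  unfold q in Hq2. split; lra.
Qed.

(* Identities holding for the three roots; the hypotheses form a Groebner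
   basis of the relations, which `ring` uses to reduce symmetric expressions. *)
Section ThreeRoots.
Variables a1 a2 a3 : R.
Hypothesis root1 : 24*a1^3 = 36*a1^2 - 12*a1 + 1.
Hypothesis root2 : 2*a2^2 = -2*a1^2 - 2*a1*a2 + 3*a1 + 3*a2 - 1.
Hypothesis root_sum : 2*a3 = 3 - 2*a1 - 2*a2.

Lemma cubic_factorization (b : R) : cubic_a b = 24 * (b - a1) * (b - a2) * (b - a3).
Proof. unfold cubic_a. ring [root_sum root2 root1]. Qed.

Lemma p9_factorization (y : R) : p9 y = -1536 * (Pa a1 y * Pa a2 y * Pa a3 y).
Proof.
  assert (H6 : forall a, 6 * Pa a y
                 = 6 + 6*(1-3*a)*y + (3 - 18*a + 18*a^2)*y^2 + (1 - 9*a + 18*a^2 - 6*a^3)*y^3)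
    by (intros a; unfold Pa; field).
  assert (H : 9 * p9 y = -64 * ((6 * Pa a1 y) * (6 * Pa a2 y) * (6 * Pa a3 y)))
    by (rewrite !H6; unfold p9; ring [root_sum root2 root1]).
  replace ((6 * Pa a1 y) * (6 * Pa a2 y) * (6 * Pa a3 y))
    with (216 * (Pa a1 y * Pa a2 y * Pa a3 y)) in H by ring.
  lra.
Qed.

End ThreeRoots.

(* Pa a with a^3 eliminated using cubic_a a = 0. *)
Definition Pa_reduced (a z : R) : R :=
  1 + (1 - 3*a)*z + (/2 - 3*a + 3*a^2)*z^2 + (/8 - a + 3*a^2/2)*z^3.

Lemma Pa_at_root (a z : R) : cubic_a a = 0 -> Pa a z = Pa_reduced a z.
Proof.
  intros H. assert (E : Pa a z - Pa_reduced a z = - cubic_a a / 24 * z^3)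
    by (unfold Pa, Pa_reduced, cubic_a; field).
  rewrite H in E. lra.
Qed.

Lemma cubic_strictly_increasing (c1 c2 c3 x y : R) : 0 < c3 -> c2^2 < 3*c1*c3 -> x < y ->
  1 + c1*x + c2*x^2 + c3*x^3 < 1 + c1*y + c2*y^2 + c3*y^3.
Proof.
  intros H3 Hd Hxy. set (s := x + y).
  assert (E : (1 + c1*y + c2*y^2 + c3*y^3) - (1 + c1*x + c2*x^2 + c3*x^3)
              = (y - x) * (c1 + c2*s + c3*(x^2 + x*y + y^2))) by (unfold s; ring).
  assert (Hq : x^2 + x*y + y^2 >= 3/4 * s^2) by (unfold s; nra).
  assert (Hp : 0 < c1 + c2*s + 3/4*c3*s^2).
  { assert (12*c3*(c1 + c2*s + 3/4*c3*s^2) = (3*c3*s + 2*c2)^2 + (12*c1*c3 - 4*c2^2)) by field.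
    pose proof (pow2_ge_0 (3*c3*s + 2*c2)). nra. }
  assert (0 < c1 + c2*s + c3*(x^2 + x*y + y^2)) by nra.
  nra.
Qed.

Section SmallestRoot.
Variable a : R.
Hypothesis Hl : 0.128886 <= a.
Hypothesis Hh : a <= 0.128887.
Hypothesis Hc : cubic_a a = 0.

(* Tangent and secant bounds on a^2, usable by linear arithmetic. *)
Let sq_bounds : 2*0.128886*a - 0.128886*0.128886 <= a^2 <= (0.128886+0.128887)*a - 0.128886*0.128887.
Proof. simpl. split; nra. Qed.

Lemma Pa1_neg_left : Pa a (-3.288) < 0.
Proof. rewrite Pa_at_root by auto. unfold Pa_reduced. pose proof sq_bounds. lra. Qed.

Lemma Pa1_pos_right : 0 < Pa a (-3.287).
Proof. rewrite Pa_at_root by auto. unfold Pa_reduced. pose proof sq_bounds. lra. Qed.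

Lemma Pa1_increasing (x y : R) : x < y -> Pa a x < Pa a y.
Proof.
  intros H. rewrite !Pa_at_root by auto. unfold Pa_reduced. pose proof sq_bounds.
  apply cubic_strictly_increasing; auto; [lra|].
  assert (0.1631 <= /2 - 3*a + 3*a^2 <= 0.1632) by lra.
  assert (0.613 <= 1 - 3*a) by lra.
  assert (0.021 <= /8 - a + 3*a^2/2) by lra.
  assert (Hs1 : (/2 - 3*a + 3*a^2)^2 <= 0.1632^2) by (apply pow_incr; lra).
  assert (Hs2 : 3 * 0.613 * 0.021 <= 3*(1 - 3*a)*(/8 - a + 3*a^2/2)) by nra.
  lra.
Qed.

(* Nonnegativity of all derivatives of order >= 1 of psi_a1, where
   u = 1/(1-a1 x) lies in [0.7, 1] for x in [-3.288, 0]. *)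
Lemma deriv_quadratic1_nonneg (n : nat) (u : R) : (2 <= n)%nat -> 0.7 <= u <= 1 ->
  0 <= deriv_quadratic a (INR n) u.
Proof.
  intros Hn Hu. pose proof sq_bounds. unfold deriv_quadratic.
  assert (Hb : 0.08412 <= pf1 a) by (unfold pf1; lra).
  assert (Hcl : -0.115346 <= pf2 a <= -0.115342) by (unfold pf2; lra).
  assert (Hd : 0.0543915 <= pf3 a) by (unfold pf3; lra).
  set (m := INR n).
  assert (Hm : 2 <= m) by (unfold m; apply (le_INR 2); exact Hn).
  assert (Hquad : pf3 a * m * (m + 1) / 2 * u^2 >= 0.0543915 * m * (m+1)/2 * u^2).
  { assert (0 <= (pf3 a - 0.0543915) * (m * (m + 1) / 2) * u^2)
      by (apply Rmult_le_pos; [apply Rmult_le_pos|]; nra).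
    nra. }
  destruct (le_lt_dec 6 n) as [H6|H6].
  - assert (Hm6 : 6 <= m) by (pose proof (le_INR 6 n H6) as H7; simpl in H7; unfold m; lra).
    assert (Hpos : 0 <= pf2 a + pf3 a * (m + 1) / 2 * u).
    { assert (7 * 0.7 <= (m + 1) * u) by nra.
      assert (0.0543915 * ((m+1)*u) <= pf3 a * ((m+1)*u)) by (apply Rmult_le_compat_r; nra).
      nra. }
    replace (pf1 a + pf2 a * m * u + pf3 a * m * (m + 1) / 2 * u ^ 2)
      with (pf1 a + m * u * (pf2 a + pf3 a * (m + 1) / 2 * u)) by (simpl; field).
    assert (0 <= m * u * (pf2 a + pf3 a * (m + 1) / 2 * u)) by (apply Rmult_le_pos; nra).
    lra.
  - assert (Hcase : m = 2 \/ m = 3 \/ m = 4 \/ m = 5).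
    { unfold m. destruct n as [|[|[|[|[|[|n]]]]]]; simpl; try lia; lra. }
    destruct Hcase as [E|[E|[E|E]]]; rewrite E in *; simpl in *; nra.
Qed.

End SmallestRoot.

Section MiddleRoot.
Variable a : R.
Hypothesis Hl : 0.302534 <= a.
Hypothesis Hh : a <= 0.302535.
Hypothesis Hc : cubic_a a = 0.

Let sq_bounds : 2*0.302534*a - 0.302534*0.302534 <= a^2 <= (0.302534+0.302535)*a - 0.302534*0.302535.
Proof. simpl. split; nra. Qed.

(* The sixth derivative of psi_a2 at 0 is negative. *)
Lemma deriv_quadratic2_neg : deriv_quadratic a 7 1 < 0.
Proof. unfold deriv_quadratic, pf1, pf2, pf3. pose proof sq_bounds. simpl in *. lra. Qed.

Lemma Pa2_pos (y : R) : y <= -3 -> 0 < Pa a y.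
Proof.
  intros Hy. rewrite Pa_at_root by auto. unfold Pa_reduced. pose proof sq_bounds.
  set (t := - y). assert (Ht : 3 <= t) by (unfold t; lra).
  replace y with (- t) by (unfold t; ring).
  pose proof (pow2_ge_0 t). pose proof (pow_le t 3 ltac:(lra)).
  assert ((1 - 3*a) * t <= 0.0924 * t) by (apply Rmult_le_compat_r; lra).
  assert (-0.133023 * t^2 <= (/2 - 3*a + 3*a^2) * t^2) by (apply Rmult_le_compat_r; lra).
  assert ((/8 - a + 3*a^2/2) * t^3 <= -0.040243 * t^3) by (apply Rmult_le_compat_r; lra).
  assert (0 < 1 - 0.0924*t - 0.133023*t^2 + 0.040243*t^3).
  { set (s := t - 3). assert (0 <= s) by (unfold s; lra).
    replace t with (s + 3) by (unfold s; ring). simpl. nra. }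
  simpl in *. lra.
Qed.

End MiddleRoot.

Section LargestRoot.
Variable a : R.
Hypothesis Hl : 1.068579 <= a.
Hypothesis Hh : a <= 1.06858.
Hypothesis Hc : cubic_a a = 0.

Let sq_bounds : 2*1.068579*a - 1.068579*1.068579 <= a^2 <= (1.068579+1.06858)*a - 1.068579*1.06858.
Proof. simpl. split; nra. Qed.

Lemma Pa3_neg (y : R) : y <= -3 -> Pa a y < 0.
Proof.
  intros Hy. rewrite Pa_at_root by auto. unfold Pa_reduced. pose proof sq_bounds.
  set (t := - y). assert (Ht : 3 <= t) by (unfold t; lra).
  replace y with (- t) by (unfold t; ring).
  pose proof (pow2_ge_0 t). pose proof (pow_le t 3 ltac:(lra)).
  assert (-2.20574 * t <= (1 - 3*a) * t) by (apply Rmult_le_compat_r; lra).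
  assert ((/2 - 3*a + 3*a^2) * t^2 <= 0.71985 * t^2) by (apply Rmult_le_compat_r; lra).
  assert (0.769212 * t^3 <= (/8 - a + 3*a^2/2) * t^3) by (apply Rmult_le_compat_r; lra).
  assert (1 + 2.20574*t + 0.71985*t^2 - 0.769212*t^3 < 0).
  { set (s := t - 3). assert (0 <= s) by (unfold s; lra).
    replace t with (s + 3) by (unfold s; ring). simpl. nra. }
  simpl in *. lra.
Qed.

End LargestRoot.

Lemma cubic_roots_exist : exists a1 a2 a3,
  0.128886 <= a1 <= 0.128887 /\ 0.302534 <= a2 <= 0.302535 /\ 1.068579 <= a3 <= 1.06858 /\
  cubic_a a1 = 0 /\ cubic_a a2 = 0 /\ cubic_a a3 = 0.
Proof.
  assert (Hcont : continuity cubic_a) by (unfold cubic_a; reg).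
  assert (Hcont' : continuity (fun a => - cubic_a a)) by (unfold cubic_a; reg).
  destruct (IVT cubic_a 0.128886 0.128887 Hcont ltac:(lra)
              ltac:(unfold cubic_a; lra) ltac:(unfold cubic_a; lra)) as [a1 [H1 E1]].
  destruct (IVT (fun a => - cubic_a a) 0.302534 0.302535 Hcont' ltac:(lra)
              ltac:(unfold cubic_a; lra) ltac:(unfold cubic_a; lra)) as [a2 [H2 E2]].
  destruct (IVT cubic_a 1.068579 1.06858 Hcont ltac:(lra)
              ltac:(unfold cubic_a; lra) ltac:(unfold cubic_a; lra)) as [a3 [H3 E3]].
  exists a1, a2, a3. repeat split; lra.
Qed.

Lemma Pa1_root_exists (a : R) : 0.128886 <= a <= 0.128887 -> cubic_a a = 0 ->
  exists xs, -3.288 <= xs <= -3.287 /\ Pa a xs = 0.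
Proof.
  intros Ha Hc.
  destruct (IVT (Pa a) (-3.288) (-3.287) ltac:(unfold Pa; reg) ltac:(lra)
              (Pa1_neg_left a ltac:(lra) ltac:(lra) Hc) (Pa1_pos_right a ltac:(lra) ltac:(lra) Hc))
    as [xs Hxs].
  exists xs. exact Hxs.
Qed.

Lemma not_am_of_negative_value (c : nat -> R) (a x : R) : cmatch c a ->
  0 < 1 - a * x -> Pa a x < 0 -> ~ abs_monotonic_at 3 c a x.
Proof.
  intros Hc Hw HP Ham.
  pose proof (pow_lt _ 3 Hw) as Hw3.
  pose proof (am_value_nonneg 3 c a x Ham ltac:(lra)) as Hn.
  rewrite rat_expr_match in Hn by exact Hc.
  assert (Pa a x / (1 - a * x) ^ 3 < 0)
    by (unfold Rdiv; apply Rmult_neg_pos; [exact HP | apply Rinv_0_lt_compat, Hw3]).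
  lra.
Qed.

Lemma not_am_middle_root_at_0 (c : nat -> R) (a : R) :
  0.302534 <= a <= 0.302535 -> cmatch c a -> ~ abs_monotonic_at 3 c a 0.
Proof.
  intros Ha Hm Ham.
  assert (Hk := am_derivs_nonneg c a 0 1 ltac:(lra) Hm ltac:(lra)
                  ltac:(intros y Hy; rewrite Rminus_0_r in Hy; pose proof (Rle_abs y); nra)
                  Ham 6).
  rewrite psi_deriv_factor in Hk by lra.
  replace (1 - a * 0) with 1 in Hk by ring. rewrite Rinv_1, pow1 in Hk.
  replace (INR 7) with 7 in Hk by (simpl; ring).
  pose proof (deriv_quadratic2_neg a ltac:(lra) ltac:(lra)) as HQ.
  assert (0 < a ^ 6 * INR (fact 6) * 1 / a ^ 3).
  { pose proof (lt_0_INR _ (lt_O_fact 6)). pose proof (pow_lt a 6 ltac:(lra)).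
    pose proof (Rinv_0_lt_compat _ (pow_lt a 3 ltac:(lra))).
    unfold Rdiv. repeat apply Rmult_lt_0_compat; lra. }
  nra.
Qed.

Section MainArgument.
Variables a1 a2 a3 xs : R.
Hypothesis Ha1 : 0.128886 <= a1 <= 0.128887.
Hypothesis Ha2 : 0.302534 <= a2 <= 0.302535.
Hypothesis Ha3 : 1.068579 <= a3 <= 1.06858.
Hypothesis Hc1 : cubic_a a1 = 0.
Hypothesis Hc2 : cubic_a a2 = 0.
Hypothesis Hc3 : cubic_a a3 = 0.
Hypothesis Hxs : -3.288 <= xs <= -3.287.
Hypothesis Pxs : Pa a1 xs = 0.

Let relations :
  2*a2^2 = -2*a1^2 - 2*a1*a2 + 3*a1 + 3*a2 - 1 /\ 2*a3 = 3 - 2*a1 - 2*a2.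
Proof. apply cubic_root_relations; auto; lra. Qed.

Let root1 : 24*a1^3 = 36*a1^2 - 12*a1 + 1.
Proof. unfold cubic_a in Hc1. lra. Qed.

Lemma roots_classification (b : R) : cubic_a b = 0 -> b = a1 \/ b = a2 \/ b = a3.
Proof.
  intros Hb. destruct relations as [root2 root_sum].
  rewrite (cubic_factorization a1 a2 a3 root1 root2 root_sum b) in Hb.
  destruct (Rmult_integral _ _ Hb) as [H|H]; [destruct (Rmult_integral _ _ H) as [H'|H']|].
  - destruct (Rmult_integral _ _ H') as [H''|H'']; [lra | left; lra].
  - right; left; lra.
  - right; right; lra.
Qed.

Lemma Pa1_sign (y : R) : (y < xs -> Pa a1 y < 0) /\ (xs < y -> 0 < Pa a1 y).
Proof.
  split; intros H; rewrite <- Pxs; apply (Pa1_increasing a1); auto; lra.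
Qed.

(* xs is the smallest real root of p9: below xs, Pa a1 and Pa a3 are negative
   and Pa a2 positive. *)
Lemma p9_smallest_root : p9 xs = 0 /\ forall y, p9 y = 0 -> xs <= y.
Proof.
  destruct relations as [root2 root_sum].
  split; [rewrite (p9_factorization a1 a2 a3 root1 root2 root_sum), Pxs; ring|].
  intros y Hy. apply Rnot_lt_le. intros Hlt.
  rewrite (p9_factorization a1 a2 a3 root1 root2 root_sum) in Hy.
  pose proof (proj1 (Pa1_sign y) Hlt).
  pose proof (Pa2_pos a2 ltac:(lra) ltac:(lra) Hc2 y ltac:(lra)).
  pose proof (Pa3_neg a3 ltac:(lra) ltac:(lra) Hc3 y ltac:(lra)).
  assert (0 < (- Pa a1 y) * Pa a2 y * (- Pa a3 y))
    by (apply Rmult_lt_0_compat; [apply Rmult_lt_0_compat|]; lra).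
  nra.
Qed.

Lemma radius_upper_bound (c : nat -> R) (a r : R) :
  in_Pi_hat 3 4 c a -> am_radius_set 3 c a r -> r <= - xs.
Proof.
  intros Hpi [[Hr Ham] | ->]; [|lra].
  destruct (Pi_hat_characterization c a Hpi) as [Hc Hm].
  apply Rnot_lt_le. intros Hlt.
  destruct (roots_classification a Hc) as [-> | [-> | ->]].
  - apply (not_am_of_negative_value c a1 (- r) Hm); [nra | | apply Ham; lra].
    apply Pa1_sign. lra.
  - apply (not_am_middle_root_at_0 c a2 Ha2 Hm). apply Ham. lra.
  - apply (not_am_of_negative_value c a3 (-3) Hm); [lra | | apply Ham; lra].
    apply Pa3_neg; lra.
Qed.

Lemma am_on_interval (x : R) : xs <= x <= 0 -> abs_monotonic_at 3 (coeffs a1) a1 x.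
Proof.
  intros Hx.
  assert (Hw : 1 <= 1 - a1 * x <= 1.424) by nra.
  apply am_of_derivs_nonneg; [lra | apply coeffs_match | |].
  - intros y Hy. pose proof (Rle_abs (y - x)). pose proof (Rle_abs (-(y - x))).
    rewrite Rabs_Ropp in *. nra.
  - intros [|j].
    + rewrite psi_deriv_0 by lra.
      assert (0 <= Pa a1 x).
      { destruct (Req_dec x xs) as [-> | Hne]; [lra|]. left. apply Pa1_sign. lra. }
      unfold Rdiv. apply Rmult_le_pos; [auto | left; apply Rinv_0_lt_compat, pow_lt; lra].
    + rewrite psi_deriv_factor by lra.
      assert (Hu : 0.7 <= / (1 - a1 * x) <= 1).
      { split; apply (Rmult_le_reg_l (1 - a1 * x)); try rewrite Rinv_r; lra. }
      apply Rmult_le_pos; [|apply deriv_quadratic1_nonneg; [lra | lra | lia | exact Hu]].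
      unfold Rdiv. apply Rmult_le_pos; [|left; apply Rinv_0_lt_compat, pow_lt; lra].
      apply Rmult_le_pos; [apply Rmult_le_pos|];
        [apply pow_le; lra | apply pos_INR | apply pow_le; lra].
Qed.

Lemma radius_attained : R_psi_eq 3 (coeffs a1) a1 (- xs).
Proof.
  split.
  - intros r. apply radius_upper_bound, coeffs_in_Pi_hat; auto; lra.
  - intros M HM. apply HM. left. split; [lra|].
    intros x Hx. apply am_on_interval. lra.
Qed.

Lemma class_radius : R_hat_eq 3 4 (- xs).
Proof.
  split.
  - intros r (c & a & Hpi & Hr). exact (radius_upper_bound c a r Hpi Hr).
  - intros M HM. apply (proj2 radius_attained). intros r Hr. apply HM.
    exists (coeffs a1), a1. split; [apply coeffs_in_Pi_hat; auto; lra | exact Hr].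
Qed.

End MainArgument.

Theorem mainTheorem17 :
  exists xs : R,
    p9 xs = 0 /\ (forall y : R, p9 y = 0 -> xs <= y) /\
    R_hat_eq 3 4 (- xs) /\
    (exists (a : R) (c : nat -> R),
       cubic_a a = 0 /\ (forall b : R, cubic_a b = 0 -> a <= b) /\
       c 0%nat = 1 /\ in_Pi_hat 3 4 c a /\ R_psi_eq 3 c a (- xs)).
Proof.
  destruct cubic_roots_exist as (a1 & a2 & a3 & Ha1 & Ha2 & Ha3 & Hc1 & Hc2 & Hc3).
  destruct (Pa1_root_exists a1 Ha1 Hc1) as (xs & Hxs & Pxs).
  destruct (p9_smallest_root a1 a2 a3 xs) as [Hp9 Hmin]; auto.
  exists xs. split; [exact Hp9|]. split; [exact Hmin|].
  split; [apply (class_radius a1 a2 a3 xs); auto|].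
  exists a1, (coeffs a1). split; [exact Hc1|]. split.
  - intros b Hb. destruct (roots_classification a1 a2 a3) with (b := b) as [-> | [-> | ->]]; auto; lra.
  - split; [reflexivity|]. split; [apply coeffs_in_Pi_hat; auto; lra|].
    apply (radius_attained a1 a2 a3 xs); auto.
Qed.
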